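(* Let $\mathbb{X}$ be a two-dimensional smooth real Banach space and $\mathbb{H}$ a real Hilbert space (of dimension at least $2$). Let $T\in\mathbb{L}(\mathbb{X},\mathbb{H})$ be of rank one with $\|T\|=1$, and suppose $M_T=\{\pm x\}$. Then $T$ is an extreme contraction if and only if $(x,Tx)$ is not a CPP.
   Context: $M_T=\{x\in S_{\mathbb{X}}:\|Tx\|=\|T\|\}$. A norm one $T$ is an extreme contraction if it is an extreme point of the closed unit ball of $\mathbb{L}(\mathbb{X},\mathbb{H})$. $B(x,r)=\{u:\|u-x\|<r\}$. $x\perp_B y$ means $\|x+\lambda y\|\ge\|x\|$ for all real $\lambda$; $x^\perp=\{y:x\perp_By\}$. For $x\in S_{\mathbb{X}}$, $y\in S_{\mathbb{H}}$, $(x,y)$ is a CPP if there exist $r>0,\mu>0$ such that for all $z\in x^\perp\cap S_{\mathbb{X}}$, all $w\in y^\perp\cap S_{\mathbb{H}}$ and all $a,b\in\mathbb{R}$, $ax+bz\in B(x,r)\cap S_{\mathbb{X}}$ implies $\|ay+b\mu w\|\le1$. *)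

From HB Require Import structures.
From mathcomp Require Import all_boot all_order all_algebra.
From mathcomp Require Import all_classical all_reals all_analysis.
Set Implicit Arguments. Unset Strict Implicit. Unset Printing Implicit Defensive.
Import Order.TTheory GRing.Theory Num.Theory.
Import numFieldNormedType.Exports.
Local Open Scope classical_set_scope.
Local Open Scope ring_scope.

Section Defs.
Variable R : realType.

Definition islin (U V : lmodType R) (f : U -> V) : Prop :=
  forall (a : R) (u v : U), f (a *: u + v) = a *: f u + f v.

Definition isBL (X Y : normedModType R) (T : X -> Y) : Prop :=
  islin T /\ exists C : R, forall x, `|T x| <= C * `|x|.

Definition opnorm (X Y : normedModType R) (T : X -> Y) : R :=
  sup [set `|T x| | x in [set x : X | `|x| = 1]].

Definition normAttSet (X Y : normedModType R) (T : X -> Y) : set X :=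
  [set x | `|x| = 1 /\ `|T x| = opnorm T].

Definition dim2 (X : lmodType R) : Prop :=
  exists e1 e2 : X,
    (forall x : X, exists a b : R, x = a *: e1 + b *: e2) /\
    (forall a b : R, a *: e1 + b *: e2 = 0 -> a = 0 /\ b = 0).

Definition dim_ge2 (X : lmodType R) : Prop :=
  exists u v : X, forall a b : R, a *: u + b *: v = 0 -> a = 0 /\ b = 0.

Definition supp_fun (X : normedModType R) (x : X) (f : X -> R^o) : Prop :=
  islin f /\ (forall y, `|f y| <= `|y|) /\ f x = 1.

Definition smooth (X : normedModType R) : Prop :=
  forall x : X, `|x| = 1 ->
    forall f g : X -> R^o, supp_fun x f -> supp_fun x g -> forall y, f y = g y.

Definition hilbert_norm (H : normedModType R) : Prop :=
  exists ip : H -> H -> R,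
    (forall u v, ip u v = ip v u) /\
    (forall a u v w, ip (a *: u + v) w = a * ip u w + ip v w) /\
    (forall u, `|u| ^+ 2 = ip u u).

Definition rank_one (X Y : lmodType R) (T : X -> Y) : Prop :=
  (exists x, T x != 0) /\ exists y : Y, forall x, exists c : R, T x = c *: y.

Definition extreme_contraction (X Y : normedModType R) (T : X -> Y) : Prop :=
  opnorm T = 1 /\
  forall (T1 T2 : X -> Y) (t : R),
    isBL T1 -> isBL T2 -> opnorm T1 <= 1 -> opnorm T2 <= 1 ->
    0 < t < 1 -> (forall x, T x = t *: T1 x + (1 - t) *: T2 x) ->
    forall x, T1 x = T2 x.

Definition BJorth (X : normedModType R) (x y : X) : Prop :=
  forall l : R, `|x| <= `|x + l *: y|.

Definition CPP (X Y : normedModType R) (x : X) (y : Y) : Prop :=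
  `|x| = 1 /\ `|y| = 1 /\
  exists r mu : R, 0 < r /\ 0 < mu /\
    forall (z : X) (w : Y), BJorth x z -> `|z| = 1 -> BJorth y w -> `|w| = 1 ->
      forall a b : R, `|a *: x + b *: z - x| < r -> `|a *: x + b *: z| = 1 ->
        `|a *: y + (b * mu) *: w| <= 1.

End Defs.

(* Write T u = phi u *: y with y = T x, where phi is a norm-one functional
   with phi x = 1, and split u = phi u *: x + c u *: z with z a unit vector of
   ker phi.  For mu > 0 and a unit w orthogonal to y, the operator
   u |-> phi u *: y + (mu * c u) *: w is a contraction exactly when
   phi u ^+ 2 + (mu * c u) ^+ 2 <= `|u| ^+ 2 for all u ([ker_bound mu]), and
   both conditions of the theorem are equivalent to the absence of such a mu:
   - given such a mu, T is the midpoint of the contractions obtained from +mu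
     and -mu, and (x, y) is a CPP with the same mu;
   - if T = t T1 + (1 - t) T2 nontrivially, smoothness at x forces
     <T1 u, y> = phi u, so T1 - T is orthogonal to y and vanishes at x, and
     mu = `|T1 z - T z|` works;
   - if (x, y) is a CPP with constants r and mu, the bound holds with mu on
     the unit vectors within r of x, while away from +x and -x the functional
     phi stays below some q < 1, as it attains its norm only at +x and -x and
     X is a plane; there a small enough mu works. *)

From HB Require Import structures.
From mathcomp Require Import all_boot all_order all_algebra.
From mathcomp Require Import all_classical all_reals all_analysis.
From mathcomp Require Import ring lra.
Import Order.TTheory GRing.Theory Num.Theory.
Import numFieldNormedType.Exports.
Local Open Scope classical_set_scope.
Local Open Scope ring_scope.
Set Implicit Arguments. Unset Strict Implicit. Unset Printing Implicit Defensive.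

Section ExtremeContractions.
Variable R : realType.

Lemma scaleRo (a b : R) : a *: (b : R^o) = a * b. Proof. by []. Qed.

Section Linear.
Variables (U V : lmodType R) (f : U -> V).
Hypothesis f_lin : islin f.

Lemma islin0 : f 0 = 0.
Proof.
have := f_lin 1 0 0; rewrite scale1r !addr0 scale1r => e.
by apply: (addrI (f 0)); rewrite addr0 -e.
Qed.

Lemma islinD u v : f (u + v) = f u + f v.
Proof. by have := f_lin 1 u v; rewrite !scale1r. Qed.

Lemma islinZ a u : f (a *: u) = a *: f u.
Proof. by have := f_lin a u 0; rewrite islin0 !addr0. Qed.

Lemma islinN u : f (- u) = - f u.
Proof. by rewrite -scaleN1r islinZ scaleN1r. Qed.

Lemma islinB u v : f (u - v) = f u - f v.
Proof. by rewrite islinD islinN. Qed.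

End Linear.

Definition free2 (U : lmodType R) (v1 v2 : U) :=
  forall a b : R, a *: v1 + b *: v2 = 0 -> a = 0 /\ b = 0.

Section Plane.
Variable U : lmodType R.
Implicit Types a b p q r s : R.

Lemma scale_comb2 (v1 v2 : U) a b p q r s :
  a *: (p *: v1 + q *: v2) + b *: (r *: v1 + s *: v2) =
  (a * p + b * r) *: v1 + (a * q + b * s) *: v2.
Proof. by rewrite !scalerDr !scalerA !scalerDl addrACA. Qed.

Lemma free2_coordI (v1 v2 : U) a b p q : free2 v1 v2 ->
  a *: v1 + b *: v2 = p *: v1 + q *: v2 -> a = p /\ b = q.
Proof.
move=> free /eqP; rewrite -subr_eq0 => /eqP e.
have [] : a - p = 0 /\ b - q = 0.
  by apply: free; rewrite !scalerBl -e opprD addrACA.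
by split; lra.
Qed.

Lemma dim2_span : dim2 U -> forall v1 v2 : U, free2 v1 v2 ->
  forall u, exists a b, u = a *: v1 + b *: v2.
Proof.
move=> [e1 [e2 [e_span e_free]]] v1 v2.
have [p [q ->]] := e_span v1; have [r [s ->]] := e_span v2.
move=> free u; have [m [n ->]] := e_span u.
have det_neq0 : p * s - q * r != 0.
  apply/eqP => det0.
  have [s0 q0] : s = 0 /\ - q = 0.
    apply: free; rewrite scale_comb2.
    have -> : s * p + - q * r = 0 by lra.
    have -> : s * q + - q * s = 0 by lra.
    by rewrite !scale0r addr0.
  have [r0 p0] : r = 0 /\ - p = 0.
    apply: free; rewrite scale_comb2.
    have -> : r * p + - p * r = 0 by lra.
    have -> : r * q + - p * s = 0 by lra.
    by rewrite !scale0r addr0.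
  have [|/eqP] := free 1 0; last by rewrite oner_eq0.
  by rewrite (_ : p = 0) 1?(_ : q = 0) ?scale0r ?add0r ?scaler0 ?addr0 //; lra.
exists ((m * s - n * r) / (p * s - q * r)), ((p * n - q * m) / (p * s - q * r)).
by rewrite scale_comb2; congr (_ *: _ + _ *: _); field.
Qed.

Lemma dim2_coord : dim2 U -> forall v1 v2 : U, free2 v1 v2 ->
  exists c1 c2 : U -> R^o,
    [/\ islin c1, islin c2 & forall u, u = c1 u *: v1 + c2 u *: v2].
Proof.
move=> d2 v1 v2 free.
have /boolp.choice [f f_eq] :
    forall u, exists p : R * R, u = p.1 *: v1 + p.2 *: v2.
  by move=> u; have [a [b e]] := dim2_span d2 free u; exists (a, b).
have f_lin a u v : (f (a *: u + v)).1 = a * (f u).1 + (f v).1 /\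
                   (f (a *: u + v)).2 = a * (f u).2 + (f v).2.
  apply: (free2_coordI free); rewrite -f_eq {1}(f_eq u) {1}(f_eq v).
  by rewrite scalerDr !scalerA !scalerDl addrACA.
exists (fun u => (f u).1), (fun u => (f u).2); split => //.
- by move=> a u v; case: (f_lin a u v).
- by move=> a u v; case: (f_lin a u v).
Qed.

End Plane.

Section Normed.
Variables X H : normedModType R.

Lemma BJorth_free2 (x z : X) : `|x| = 1 -> z != 0 -> BJorth x z -> free2 x z.
Proof.
move=> x_unit z_neq0 BJ a b e.
have [a0|a_neq0] := eqVneq a 0.
  move: e; rewrite a0 scale0r add0r => /eqP.
  by rewrite scaler_eq0 (negbTE z_neq0) orbF => /eqP.
have := BJ (b / a).
have -> : x + (b / a) *: z = a^-1 *: (a *: x + b *: z).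
  by rewrite scalerDr !scalerA mulVf // scale1r mulrC.
by rewrite e scaler0 normr0 x_unit ler10.
Qed.

(* The coordinate functional of the basis (x, z) also supports x, and
   smoothness identifies it with f. *)
Lemma smooth_BJorth_supp (x z : X) (f : X -> R^o) : smooth X -> dim2 X ->
  `|x| = 1 -> supp_fun x f -> BJorth x z -> f z = 0.
Proof.
move=> sm d2 x_unit supp BJ.
have [->|z_neq0] := eqVneq z 0; first by case: supp => /islin0.
have free := BJorth_free2 x_unit z_neq0 BJ.
have [c1 [c2 [c1_lin _ c_eq]]] := dim2_coord d2 free.
have [c1_x _] : c1 x = 1 /\ c2 x = 0.
  by apply: (free2_coordI free); rewrite -c_eq scale1r scale0r addr0.
have [c1_z _] : c1 z = 0 /\ c2 z = 1.
  by apply: (free2_coordI free); rewrite -c_eq scale1r scale0r add0r.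
have supp1 : supp_fun x c1.
  split=> //; split=> // u.
  have [->|c1_neq0] := eqVneq (c1 u) 0; first by rewrite normr0.
  have u_eq : u = c1 u *: (x + (c2 u / c1 u) *: z).
    by rewrite {1}(c_eq u) scalerDr scalerA mulrCA mulfV // mulr1.
  by rewrite {2}u_eq normrZ ler_pMr ?normr_gt0 // -x_unit; exact: BJ.
by rewrite (sm x x_unit _ _ supp supp1 z).
Qed.

Lemma opnorm_ler (T : X -> H) : isBL T -> forall u, `|T u| <= opnorm T * `|u|.
Proof.
move=> [T_lin [C T_le]] u.
have [->|u_neq0] := eqVneq u 0; first by rewrite (islin0 T_lin) !normr0 mulr0.
have u_gt0 : 0 < `|u| by rewrite normr_gt0.
have : `|T (`|u|^-1 *: u)| <= opnorm T.
  apply: ub_le_sup; last by exists (`|u|^-1 *: u); first exact: normfZV.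
  by exists C => _ [v v_unit <-]; have := T_le v; rewrite v_unit mulr1.
by rewrite (islinZ T_lin) normrZ normfV normr_id mulrC ler_pdivrMr.
Qed.

Lemma contraction_le (T : X -> H) : isBL T -> opnorm T <= 1 ->
  forall u, `|T u| <= `|u|.
Proof.
move=> T_BL T_le1 u; rewrite (le_trans (opnorm_ler T_BL u)) //.
by rewrite ler_piMl.
Qed.

Lemma opnorm_le1 (T : X -> H) (x : X) : `|x| = 1 ->
  (forall u, `|T u| <= `|u|) -> opnorm T <= 1.
Proof.
move=> x_unit T_le; apply: ge_sup; first by exists `|T x|, x.
by move=> _ [v v_unit <-]; rewrite -v_unit.
Qed.

Section InnerProduct.
Variable ip : H -> H -> R.
Hypothesis ipC : forall u v, ip u v = ip v u.
Hypothesis ipL : forall a u v w, ip (a *: u + v) w = a * ip u w + ip v w.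
Hypothesis ip_norm : forall u, `|u| ^+ 2 = ip u u.

Lemma ip0l w : ip 0 w = 0.
Proof.
have := ipL 1 0 0 w; rewrite scale1r !addr0 mul1r => e.
by apply: (addrI (ip 0 w)); rewrite addr0 -e.
Qed.

Lemma ipZl a u w : ip (a *: u) w = a * ip u w.
Proof. by have := ipL a u 0 w; rewrite addr0 ip0l addr0. Qed.

Lemma ipDl u v w : ip (u + v) w = ip u w + ip v w.
Proof. by have := ipL 1 u v w; rewrite scale1r mul1r. Qed.

Lemma ipBl u v w : ip (u - v) w = ip u w - ip v w.
Proof. by rewrite ipDl -scaleN1r ipZl mulN1r. Qed.

Lemma ipZr a u w : ip w (a *: u) = a * ip w u.
Proof. by rewrite ipC ipZl ipC. Qed.

Lemma ipDr u v w : ip w (u + v) = ip w u + ip w v.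
Proof. by rewrite ipC ipDl !(ipC w). Qed.

Lemma ip_unit y : `|y| = 1 -> ip y y = 1.
Proof. by move=> y_unit; rewrite -ip_norm y_unit expr1n. Qed.

Lemma normD_orth (y v : H) a : `|y| = 1 -> ip v y = 0 ->
  `|a *: y + v| ^+ 2 = a ^+ 2 + `|v| ^+ 2.
Proof.
move=> y_unit vy.
by rewrite !ip_norm ipDl !ipDr !ipZl !ipZr -ip_norm y_unit (ipC y v) vy; ring.
Qed.

Lemma normDZ_orth (y w : H) a b : `|y| = 1 -> `|w| = 1 -> ip w y = 0 ->
  `|a *: y + b *: w| ^+ 2 = a ^+ 2 + b ^+ 2.
Proof.
move=> y_unit w_unit wy.
by rewrite normD_orth ?ipZl ?wy ?mulr0 // normrZ w_unit mulr1 real_normK ?num_real.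
Qed.

Lemma ip_le_norm (y v : H) : `|y| = 1 -> `|ip v y| <= `|v|.
Proof.
move=> y_unit; rewrite -ler_sqr ?nnegrE // real_normK ?num_real //.
have orth : ip (v - ip v y *: y) y = 0 by rewrite ipBl ipZl ip_unit // mulr1 subrr.
have := normD_orth (ip v y) y_unit orth; rewrite addrC subrK => ->.
by rewrite lerDl sqr_ge0.
Qed.

Lemma BJorth_ip0 (y w : H) : `|y| = 1 -> `|w| = 1 -> BJorth y w -> ip y w = 0.
Proof.
move=> y_unit w_unit BJ.
have : `|y| ^+ 2 <= `|y + (- ip y w) *: w| ^+ 2.
  by rewrite ler_sqr ?nnegrE.
rewrite !ip_norm ipDl !ipDr !ipZl !ipZr -!ip_norm y_unit w_unit (ipC w y).
by move=> h; apply/eqP; rewrite -sqrf_eq0 eq_le sqr_ge0 andbT; lra.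
Qed.

Lemma ip0_BJorth (y w : H) : `|y| = 1 -> ip w y = 0 -> BJorth y w.
Proof.
move=> y_unit wy l; rewrite -ler_sqr ?nnegrE // -[y in y + _]scale1r.
by rewrite normD_orth ?ipZl ?wy ?mulr0 // y_unit lerDl sqr_ge0.
Qed.

Lemma exists_unit_orth (y : H) : dim_ge2 H -> `|y| = 1 ->
  exists w, `|w| = 1 /\ ip w y = 0.
Proof.
move=> [u [v free]] y_unit.
pose proj t := t - ip t y *: y.
have proj_orth t : ip (proj t) y = 0 by rewrite ipBl ipZl ip_unit // mulr1 subrr.
suff [t t_neq0] : exists t, proj t != 0.
  exists (`|proj t|^-1 *: proj t); split; first exact: normfZV.
  by rewrite ipZl proj_orth mulr0.
have [/eqP|] := eqVneq (proj u) 0; last by exists u.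
have [/eqP|] := eqVneq (proj v) 0; last by exists v.
rewrite /proj !subr_eq0 => /eqP v_eq /eqP u_eq.
move: (ip u y) (ip v y) u_eq v_eq => a b u_eq v_eq.
have [_ a0] : b = 0 /\ - a = 0.
  by apply: free; rewrite u_eq v_eq !scalerA mulNr scaleNr mulrC addrN.
have [] := free 1 0; last by move/eqP; rewrite oner_eq0.
by rewrite scale1r scale0r addr0 u_eq (_ : a = 0) ?scale0r //; lra.
Qed.

Section Functional.
Variables (x : X) (phi : X -> R^o).
Hypothesis x_unit : `|x| = 1.
Hypothesis phi_lin : islin phi.
Hypothesis phi_le : forall u, `|phi u| <= `|u|.
Hypothesis phi_x : phi x = 1.

Let supp_fun_phi : supp_fun x phi := conj phi_lin (conj phi_le phi_x).

Lemma phi_comb a b v : phi v = 0 -> phi (a *: x + b *: v) = a.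
Proof.
move=> phi_v; rewrite (islinD phi_lin) !(islinZ phi_lin) phi_x phi_v.
by rewrite !scaleRo mulr1 mulr0 addr0.
Qed.

Lemma ker_BJorth v : phi v = 0 -> BJorth x v.
Proof.
move=> phi_v l; have := phi_le (x + l *: v).
by rewrite -[x in x + _]scale1r phi_comb // normr1 x_unit.
Qed.

Lemma exists_ker_coord : dim2 X -> exists (z : X) (c : X -> R^o),
  [/\ `|z| = 1, phi z = 0, islin c & forall u, u = phi u *: x + c u *: z].
Proof.
move=> d2; have [e1 [e2 [e_span e_free]]] := d2.
pose z0 := phi e2 *: e1 - phi e1 *: e2.
have phi_z0 : phi z0 = 0.
  by rewrite (islinB phi_lin) !(islinZ phi_lin) !scaleRo mulrC subrr.
have z0_neq0 : z0 != 0.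
  apply/eqP => /eqP; rewrite subr_eq0 => /eqP z0_eq.
  have [phi_e2 phi_e1] : phi e2 = 0 /\ - phi e1 = 0.
    by apply: e_free; rewrite z0_eq scaleNr addrN.
  have [a [b x_eq]] := e_span x.
  move: phi_x; rewrite x_eq (islinD phi_lin) !(islinZ phi_lin) phi_e2.
  rewrite (_ : phi e1 = 0); last by lra.
  by rewrite !scaleRo !mulr0 addr0 => /eqP; rewrite eq_sym oner_eq0.
pose z := `|z0|^-1 *: z0.
have phi_z : phi z = 0 by rewrite (islinZ phi_lin) phi_z0 scaler0.
have free : free2 x z.
  move=> a b e; have a0 : a = 0 by rewrite -(phi_comb a b phi_z) e islin0.
  split=> //; move/eqP: e; rewrite a0 scale0r add0r scaler_eq0 => /orP [/eqP //|].
  by rewrite scaler_eq0 invr_eq0 normr_eq0 (negbTE z0_neq0).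
have [c1 [c2 [_ c2_lin c_eq]]] := dim2_coord d2 free.
exists z, c2; split=> //; first exact: normfZV.
by move=> u; rewrite {1}(c_eq u) -[c1 u](phi_comb _ (c2 u) phi_z) -c_eq.
Qed.

Variables (z : X) (c : X -> R^o).
Hypothesis z_unit : `|z| = 1.
Hypothesis phi_z : phi z = 0.
Hypothesis c_lin : islin c.
Hypothesis decomp : forall u, u = phi u *: x + c u *: z.

Let z_neq0 : z != 0. Proof. by rewrite -normr_eq0 z_unit oner_neq0. Qed.

Lemma coordE a b : c (a *: x + b *: z) = b.
Proof.
set u := a *: x + b *: z.
have : (c u - b) *: z = 0.
  rewrite scalerBl; apply/eqP; rewrite subr_eq0; apply/eqP.
  by apply: (addrI (a *: x)); rewrite -[in LHS](phi_comb a b phi_z) -decomp.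
by move/eqP; rewrite scaler_eq0 (negbTE z_neq0) orbF subr_eq0 => /eqP.
Qed.

Lemma coord_z : c z = 1.
Proof. by rewrite -[z]add0r -[0](scale0r x) -[z in _ + z]scale1r coordE. Qed.

Lemma coord_le u : `|c u| <= 2 * `|u|.
Proof.
have : c u *: z = u - phi u *: x by rewrite {2}(decomp u) addrAC subrr add0r.
move/(congr1 Num.norm); rewrite normrZ z_unit mulr1 => ->.
rewrite (le_trans (ler_normB _ _)) // normrZ x_unit mulr1.
by have := phi_le u; lra.
Qed.

Definition ker_bound (mu : R) := forall u, phi u ^+ 2 + (mu * c u) ^+ 2 <= `|u| ^+ 2.

Lemma ker_bound_unit mu :
  (forall v, `|v| = 1 -> 0 <= phi v -> phi v ^+ 2 + (mu * c v) ^+ 2 <= 1) ->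
  ker_bound mu.
Proof.
move=> bound_unit.
have bound_sphere v : `|v| = 1 -> phi v ^+ 2 + (mu * c v) ^+ 2 <= 1.
  move=> v_unit; have [|phi_lt0] := lerP 0 (phi v); first exact: bound_unit.
  have := bound_unit (- v).
  rewrite normrN (islinN phi_lin) (islinN c_lin) mulrN !sqrrN; apply=> //.
  by rewrite oppr_ge0 ltW.
move=> u; have [->|u_neq0] := eqVneq u 0.
  by rewrite (islin0 phi_lin) (islin0 c_lin) normr0 mulr0 expr0n /= addr0.
pose v := `|u|^-1 *: u.
have u_eq : u = `|u| *: v by rewrite scalerA mulfV ?normr_eq0 // scale1r.
have -> : phi u = `|u| * phi v by rewrite {1}u_eq (islinZ phi_lin).
have -> : c u = `|u| * c v by rewrite {1}u_eq (islinZ c_lin).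
have := bound_sphere _ (normfZV u_neq0).
move: (phi v) (c v) => p b h.
rewrite (_ : _ + _ = `|u| ^+ 2 * (p ^+ 2 + (mu * b) ^+ 2)); last by ring.
by rewrite ler_piMr ?sqr_ge0.
Qed.

Section Attained.
Hypothesis phi_max : forall v, `|v| = 1 -> `|phi v| = 1 -> v = x \/ v = - x.

Lemma norm_add_ker_gt1 s : s != 0 -> 1 < `|x + s *: z|.
Proof.
move=> s_neq0; rewrite lt_neqAle -{2}x_unit ker_BJorth // andbT.
apply/eqP => /esym N1.
have phi_xz : phi (x + s *: z) = 1 by rewrite -[x in x + _]scale1r phi_comb.
case: (phi_max N1 _) => [|e|e]; first by rewrite phi_xz normr1.
- have /eqP : s *: z = 0 by apply: (addrI x); rewrite addr0.
  by rewrite scaler_eq0 (negbTE s_neq0) (negbTE z_neq0).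
- by move: phi_xz; rewrite e (islinN phi_lin) phi_x => h; lra.
Qed.

Lemma norm_add_ker_mono l s :
  0 <= l <= 1 -> `|x + (l * s) *: z| <= `|x + s *: z|.
Proof.
move=> /andP [l_ge0 l_le1].
have -> : x + (l * s) *: z = (1 - l) *: x + l *: (x + s *: z).
  by rewrite scalerDr scalerA scalerBl scale1r addrA subrK.
rewrite (le_trans (ler_normD _ _)) // !normrZ x_unit mulr1 !ger0_norm ?subr_ge0 //.
by have := ker_BJorth phi_z s; rewrite x_unit; nra.
Qed.

Lemma norm_add_ker_away s0 : 0 < s0 ->
  exists2 m, 1 < m & forall s, s0 <= `|s| -> m <= `|x + s *: z|.
Proof.
move=> s0_gt0; exists (Num.min `|x + s0 *: z| `|x + (- s0) *: z|).
  by rewrite lt_min !norm_add_ker_gt1 // ?oppr_eq0 gt_eqF.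
move=> s s_ge; have s_gt0 : 0 < `|s| by apply: lt_le_trans s_ge.
have s_neq0 : s != 0 by rewrite -normr_gt0.
have l_range : 0 <= s0 / `|s| <= 1.
  by rewrite divr_ge0 ?(ltW s0_gt0) ?normr_ge0 //= ler_pdivrMr // mul1r.
have := norm_add_ker_mono s l_range; rewrite ge_min.
have [s_ge0|s_lt0] := lerP 0 s.
- by rewrite ger0_norm // mulfVK // => ->.
- by rewrite ltr0_norm // invrN mulrN mulNr mulfVK // => ->; rewrite orbT.
Qed.

(* On the line x + s z the norm exceeds 1 for s != 0 and grows with |s|, and
   v = phi v *: (x + (c v / phi v) *: z): so phi v is close to 1 only when
   c v is close to 0, i.e. when v is close to x. *)
Lemma phi_le_away r : 0 < r -> exists2 q, q < 1 &
  forall v, `|v| = 1 -> 0 <= phi v -> r <= `|v - x| -> phi v <= q.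
Proof.
move=> r_gt0.
have [m m_gt1 m_le] := norm_add_ker_away (divr_gt0 r_gt0 (@ltr0Sn _ 1)).
have m_gt0 : 0 < m := lt_trans ltr01 m_gt1.
exists (Num.max (1 - r / 2) m^-1).
  by rewrite gt_max invf_lt1 // m_gt1 andbT; lra.
move=> v v_unit phi_ge0 far; rewrite le_max.
have phi_le1 : phi v <= 1 by rewrite -v_unit (le_trans (ler_norm _)).
have dist_le : `|v - x| <= (1 - phi v) + `|c v|.
  rewrite {1}(decomp v) -addrAC -[x in _ - x]scale1r -scalerBl.
  rewrite (le_trans (ler_normD _ _)) // !normrZ x_unit z_unit !mulr1.
  by rewrite ler0_norm ?subr_le0 // opprB.
have [phi_near|] := lerP (r / 2) (1 - phi v).
  by apply/orP; left; lra.
move=> phi_far; apply/orP; right.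
have [->|phi_neq0] := eqVneq (phi v) 0; first by rewrite invr_ge0 ltW.
have phi_gt0 : 0 < phi v by rewrite lt_neqAle eq_sym phi_neq0.
have : v = phi v *: (x + (c v / phi v) *: z).
  by rewrite {1}(decomp v) scalerDr scalerA mulrCA mulfV // mulr1.
move/(congr1 Num.norm); rewrite normrZ gtr0_norm // v_unit => /esym N_eq.
have c_far : r / 2 <= `|c v / phi v|.
  rewrite normrM normfV (gtr0_norm phi_gt0) ler_pdivlMr //.
  by rewrite (le_trans (ler_piMr _ phi_le1)) //; lra.
have := ler_wpM2l (ltW phi_gt0) (m_le _ c_far); rewrite N_eq => m_le1.
by rewrite -[m^-1]mul1r ler_pdivlMr.
Qed.

End Attained.

Section Operator.
Variables (y : H) (T : X -> H).
Hypothesis y_unit : `|y| = 1.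
Hypothesis Tphi : forall u, T u = phi u *: y.

Lemma factor_lin : islin T.
Proof. by move=> a u v; rewrite !Tphi phi_lin scalerDl scaleRo scalerA. Qed.

Lemma ker_bound_CPP mu : smooth X -> dim2 X -> 0 < mu -> ker_bound mu -> CPP x y.
Proof.
move=> sm d2 mu_gt0 bound; do 2!split=> //; exists 1, mu; do 2!split=> //.
move=> v w BJv v_unit BJw w_unit a b _ u_unit.
have phi_v : phi v = 0 := smooth_BJorth_supp sm d2 x_unit supp_fun_phi BJv.
have v_eq : v = c v *: z by rewrite {1}(decomp v) phi_v scale0r add0r.
have cv_unit : `|c v| = 1 by rewrite -v_unit {2}v_eq normrZ z_unit mulr1.
have cv2 : c v ^+ 2 = 1 by rewrite -real_normK ?num_real // cv_unit expr1n.
have := bound (a *: x + b *: v).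
rewrite phi_comb // {1}v_eq scalerA coordE u_unit expr1n => ab_le.
have wy : ip w y = 0 by rewrite ipC (BJorth_ip0 y_unit w_unit BJw).
rewrite -ler_sqr ?nnegrE // expr1n (normDZ_orth _ _ y_unit w_unit wy).
by rewrite !exprMn cv2 in ab_le *; lra.
Qed.

Lemma ker_bound_not_extreme mu w : `|w| = 1 -> ip w y = 0 ->
  0 < mu -> ker_bound mu -> ~ extreme_contraction T.
Proof.
move=> w_unit wy mu_gt0 bound [_ extreme].
pose Tpm e u := T u + (e * c u) *: w.
have Tpm_contraction e :
    e ^+ 2 = mu ^+ 2 -> isBL (Tpm e) /\ opnorm (Tpm e) <= 1.
  move=> e2.
  have Tpm_le u : `|Tpm e u| <= `|u|.
    rewrite -ler_sqr ?nnegrE // /Tpm Tphi normDZ_orth //.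
    by rewrite !exprMn e2 -exprMn bound.
  split; last exact: opnorm_le1 x_unit Tpm_le.
  split; last by exists 1 => u; rewrite mul1r.
  move=> a u v; rewrite /Tpm factor_lin c_lin scaleRo mulrDr scalerDl mulrCA -scalerA.
  by rewrite scalerDr !scalerA addrACA.
have [BLp np] := Tpm_contraction mu erefl.
have [BLm nm] := Tpm_contraction (- mu) (sqrrN mu).
have T_mid u : T u = (1 / 2) *: Tpm mu u + (1 - 1 / 2) *: Tpm (- mu) u.
  rewrite /Tpm (_ : 1 - 1 / 2 = 1 / 2 :> R); last by field.
  rewrite -scalerDr addrACA mulNr scaleNr addrN addr0 scalerDr -scalerDl.
  by rewrite (_ : 1 / 2 + 1 / 2 = 1) ?scale1r //; field.
have half : 0 < (1 / 2 : R) < 1 by apply/andP; split; lra.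
have := extreme _ _ _ BLp BLm np nm half T_mid z.
rewrite /Tpm coord_z !mulr1 => /addrI/(congr1 (ip^~ w)) /=.
by rewrite !ipZl ip_unit // !mulr1; lra.
Qed.

Lemma CPP_ker_bound w :
  (forall v, `|v| = 1 -> `|phi v| = 1 -> v = x \/ v = - x) ->
  `|w| = 1 -> ip w y = 0 -> CPP x y -> exists2 mu, 0 < mu & ker_bound mu.
Proof.
move=> phi_max w_unit wy [_ [_ [r [mu [r_gt0 [mu_gt0 CPP_bound]]]]]].
have [q q_lt1 q_away] := phi_le_away phi_max r_gt0.
pose eps := Num.min mu ((1 - q) / 4).
have eps_gt0 : 0 < eps by rewrite lt_min mu_gt0 /=; lra.
have eps_le_mu : eps <= mu by rewrite ge_min lexx.
have eps_le_q : eps <= (1 - q) / 4 by rewrite ge_min lexx orbT.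
exists eps => //; apply: ker_bound_unit => v v_unit phi_ge0.
have cv_le : c v ^+ 2 <= 4.
  have := coord_le v; rewrite v_unit mulr1 -ler_sqr ?nnegrE //.
  by rewrite real_normK ?num_real // => /le_trans; apply; lra.
have [near|far] := ltrP `|v - x| r.
- have := CPP_bound z w (ker_BJorth phi_z) z_unit (ip0_BJorth y_unit wy) w_unit.
  move=> /(_ (phi v) (c v)); rewrite -decomp => /(_ near v_unit) uv_le.
  have : `|phi v *: y + (c v * mu) *: w| ^+ 2 <= 1 by rewrite expr_le1.
  rewrite normDZ_orth // !exprMn => h.
  have : eps ^+ 2 <= mu ^+ 2 by rewrite ler_sqr ?nnegrE ?(ltW eps_gt0) ?(ltW mu_gt0).
  by nra.
- have := q_away v v_unit phi_ge0 far; nra.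
Qed.

Lemma smooth_face_bound T1 :
  smooth X -> islin T1 -> (forall u, `|T1 u| <= `|u|) -> ip (T1 x) y = 1 ->
  forall u, phi u ^+ 2 + `|T1 u - T u| ^+ 2 <= `|u| ^+ 2.
Proof.
move=> sm T1_lin T1_le T1x u.
have supp1 : supp_fun x (fun v => ip (T1 v) y : R^o).
  split; first by move=> a v1 v2; rewrite T1_lin ipL.
  by split=> // v; rewrite (le_trans (ip_le_norm _ y_unit)).
have ip_T1 : ip (T1 u) y = phi u := esym (sm _ x_unit _ _ supp_fun_phi supp1 u).
have orth : ip (T1 u - T u) y = 0.
  by rewrite ipBl ip_T1 Tphi ipZl ip_unit // mulr1 subrr.
by rewrite -(normD_orth _ y_unit orth) -Tphi addrC subrK ler_sqr ?nnegrE.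
Qed.

Lemma not_extreme_ker_bound T1 T2 t : smooth X ->
  isBL T1 -> isBL T2 -> opnorm T1 <= 1 -> opnorm T2 <= 1 -> 0 < t < 1 ->
  (forall u, T u = t *: T1 u + (1 - t) *: T2 u) -> (exists x0, T1 x0 != T2 x0) ->
  exists2 mu, 0 < mu & ker_bound mu.
Proof.
move=> sm BL1 BL2 n1 n2 /andP [t_gt0 t_lt1] T_eq [x0 T12_neq].
have [T1_lin _] := BL1.
have T1_le := contraction_le BL1 n1.
have T1x : ip (T1 x) y = 1.
  have := congr1 (ip^~ y) (T_eq x).
  rewrite /= Tphi phi_x scale1r ip_unit // ipL ipZl.
  have := le_trans (ip_le_norm (T1 x) y_unit) (T1_le x).
  have := le_trans (ip_le_norm (T2 x) y_unit) (contraction_le BL2 n2 x).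
  rewrite x_unit; move: (ip (T1 x) y) (ip (T2 x) y) => a b.
  by rewrite !ler_norml => /andP [? ?] /andP [? ?]; nra.
pose S u := T1 u - T u.
have bound : forall u, phi u ^+ 2 + `|S u| ^+ 2 <= `|u| ^+ 2.
  exact: smooth_face_bound sm T1_lin T1_le T1x.
have S_lin : islin S by move=> a u v; rewrite /S T1_lin factor_lin scalerBr opprD addrACA.
have S_x : S x = 0.
  have := bound x; rewrite phi_x x_unit expr1n -[X in _ <= X]addr0 lerD2l => S_le.
  by apply/eqP; rewrite -normr_eq0 -sqrf_eq0 eq_le S_le sqr_ge0.
have S_eq u : S u = c u *: S z.
  by rewrite {1}(decomp u) (islinD S_lin) !(islinZ S_lin) S_x scaler0 add0r.
have S_z : S z != 0.
  apply: contra T12_neq => /eqP S_z0.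
  have T1_eq : T1 x0 = T x0.
    by apply/eqP; rewrite -subr_eq0 -/(S x0) S_eq S_z0 scaler0.
  have : (1 - t) *: T2 x0 = (1 - t) *: T x0.
    by rewrite [RHS]scalerBl scale1r {1}(T_eq x0) T1_eq addrAC subrr add0r.
  have t_neq1 : 1 - t != 0 by rewrite subr_eq0 (gt_eqF t_lt1).
  by move/(scalerI t_neq1) => ->; rewrite T1_eq.
exists `|S z|; first by rewrite normr_gt0.
move=> u; have := bound u.
by rewrite S_eq normrZ mulrC !exprMn real_normK ?num_real.
Qed.

Lemma extreme_contraction_iff_not_CPP : smooth X -> dim2 X -> opnorm T = 1 ->
  (forall v, `|v| = 1 -> `|phi v| = 1 -> v = x \/ v = - x) ->
  (exists w, `|w| = 1 /\ ip w y = 0) ->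
  extreme_contraction T <-> ~ CPP x y.
Proof.
move=> sm d2 T_norm phi_max [w [w_unit wy]]; split.
- move=> extreme /(CPP_ker_bound phi_max w_unit wy) [mu mu_gt0 bound].
  exact: ker_bound_not_extreme w_unit wy mu_gt0 bound extreme.
- move=> not_CPP; split=> // T1 T2 t BL1 BL2 n1 n2 t01 T_eq u.
  apply: boolp.contrapT => T12_neq; apply: not_CPP.
  have [|mu mu_gt0 bound] := not_extreme_ker_bound sm BL1 BL2 n1 n2 t01 T_eq.
    by exists u; apply/eqP.
  exact: ker_bound_CPP sm d2 mu_gt0 bound.
Qed.

End Operator.
End Functional.

Section RankOne.
Variables (T : X -> H) (x : X).
Hypothesis T_BL : isBL T.
Hypothesis T_rank1 : rank_one T.
Hypothesis T_norm : opnorm T = 1.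
Hypothesis T_att : normAttSet T = [set x; - x].

Lemma normAtt_unit : `|x| = 1 /\ `|T x| = 1.
Proof.
have : normAttSet T x by rewrite T_att; left.
by rewrite /normAttSet /= T_norm.
Qed.

Definition rank1_coef u : R^o := ip (T u) (T x).

Lemma rank1_coefE u : T u = rank1_coef u *: T x.
Proof.
have [_ [y0 T_y0]] := T_rank1; have [cx Tx_eq] := T_y0 x.
have [_ Tx_unit] := normAtt_unit.
have cx_neq0 : cx != 0.
  apply/eqP => cx0; move: Tx_unit.
  by rewrite Tx_eq cx0 scale0r normr0 => /eqP; rewrite eq_sym oner_eq0.
rewrite /rank1_coef; have [cu ->] := T_y0 u.
have -> : cu *: y0 = (cu / cx) *: T x by rewrite Tx_eq scalerA mulfVK.
by rewrite ipZl ip_unit ?mulr1.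
Qed.

Lemma rank1_coef_lin : islin rank1_coef.
Proof. by move=> a u v; rewrite /rank1_coef (proj1 T_BL) ipL. Qed.

Lemma rank1_coef_le u : `|rank1_coef u| <= `|u|.
Proof.
have [_ Tx_unit] := normAtt_unit.
rewrite (le_trans (ip_le_norm _ Tx_unit)) //.
by have := opnorm_ler T_BL u; rewrite T_norm mul1r.
Qed.

Lemma rank1_coef_x : rank1_coef x = 1.
Proof. by rewrite /rank1_coef ip_unit //; case: normAtt_unit. Qed.

Lemma rank1_coef_max v : `|v| = 1 -> `|rank1_coef v| = 1 -> v = x \/ v = - x.
Proof.
move=> v_unit coef_unit; have : normAttSet T v.
  rewrite /normAttSet /= T_norm rank1_coefE normrZ coef_unit mul1r.
  by case: normAtt_unit.
by rewrite T_att.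
Qed.

End RankOne.
End InnerProduct.
End Normed.
End ExtremeContractions.

Theorem mainTheorem10 (R : realType) (X : normedModType R)
  (H : completeNormedModType R) (T : X -> H) (x : X) :
  dim2 X -> smooth X ->
  hilbert_norm H -> dim_ge2 H ->
  isBL T -> rank_one T -> opnorm T = 1 ->
  normAttSet T = [set x; - x] ->
  (extreme_contraction T <-> ~ CPP x (T x)).
Proof.
move=> d2 sm [ip [ipC [ipL ip_norm]]] dimH T_BL T_rank1 T_norm T_att.
have [x_unit Tx_unit] := normAtt_unit T_norm T_att.
have phi_lin := rank1_coef_lin ipL x T_BL.
have phi_x := rank1_coef_x ip_norm T_norm T_att.
have [z [c [z_unit phi_z c_lin decomp]]] := exists_ker_coord phi_lin phi_x d2.
have Tx_orth := exists_unit_orth ipL ip_norm dimH Tx_unit.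
have phi_max := rank1_coef_max ipL ip_norm T_rank1 T_norm T_att.
have phi_le := rank1_coef_le ipC ipL ip_norm T_BL T_norm T_att.
have Tphi := rank1_coefE ipL ip_norm T_rank1 T_norm T_att.
exact: (extreme_contraction_iff_not_CPP ipC ipL ip_norm x_unit phi_lin phi_le
  phi_x z_unit phi_z c_lin decomp Tx_unit Tphi sm d2 T_norm phi_max Tx_orth).
Qed.
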